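(* For any sequence of positive integers $(n_k)_{k\ge1}$ with $n_{k+1}>n_k^2$ for all $k\ge1$, there exists an infinite set $\mathcal{K}\subset\mathbb{N}$ such that $$L\Big(\{m\in\mathbb{N}: m\ge2\}\setminus\bigcup_{k\in\mathcal{K}}\{m\in\mathbb{N}: n_k\le m<n_{k+1}\}\Big)$$ is lineable but not densely lineable.
   Context: $\ell^\infty$ is the Banach space of bounded real sequences with the sup norm. For $x\in\ell^\infty$, $L_x$ denotes the set of accumulation points (subsequential limits) of $x$. For a set $A$ of cardinalities, $L(A)=\{x\in\ell^\infty: |L_x|\in A\}$. A subset $Y$ of $\ell^\infty$ is lineable if $Y\cup\{0\}$ contains an infinite-dimensional linear subspace, and densely lineable if it contains such a subspace which is dense in $\ell^\infty$. *)

From Stdlib Require Import Reals Lra Lia List.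
Open Scope R_scope.

Definition bounded (x : nat -> R) : Prop :=
  exists M : R, forall k, Rabs (x k) <= M.

Definition acc_points (x : nat -> R) (a : R) : Prop :=
  exists phi : nat -> nat, (forall k, (phi k < phi (S k))%nat) /\
                           Un_cv (fun k => x (phi k)) a.

Definition has_card (S : R -> Prop) (m : nat) : Prop :=
  exists l : list R, NoDup l /\ length l = m /\ (forall a, S a <-> In a l).

(* L(A) for a set A of (finite) cardinalities, A given as a set of naturals. *)
Definition Lset (A : nat -> Prop) (x : nat -> R) : Prop :=
  bounded x /\ exists m, A m /\ has_card (acc_points x) m.

Definition is_subspace (V : (nat -> R) -> Prop) : Prop :=
  (forall x, V x -> bounded x) /\
  V (fun _ => 0) /\
  (forall x y, V x -> V y -> V (fun k => x k + y k)) /\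
  (forall (c : R) x, V x -> V (fun k => c * x k)).

Fixpoint lincomb (n : nat) (c : nat -> R) (f : nat -> nat -> R) (k : nat) : R :=
  match n with
  | O => 0
  | S n' => lincomb n' c f k + c n' * f n' k
  end.

Definition inf_dim (V : (nat -> R) -> Prop) : Prop :=
  forall n : nat, exists f : nat -> nat -> R,
    (forall i, (i < n)%nat -> V (f i)) /\
    (forall c : nat -> R, (forall k, lincomb n c f k = 0) ->
       forall i, (i < n)%nat -> c i = 0).

Definition dense_linf (V : (nat -> R) -> Prop) : Prop :=
  forall x, bounded x -> forall eps, 0 < eps ->
    exists v, V v /\ forall k, Rabs (x k - v k) <= eps.

Definition lineable (Y : (nat -> R) -> Prop) : Prop :=
  exists V, is_subspace V /\ inf_dim V /\
    (forall x, V x -> Y x \/ (forall k, x k = 0)).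

Definition densely_lineable (Y : (nat -> R) -> Prop) : Prop :=
  exists V, is_subspace V /\ inf_dim V /\ dense_linf V /\
    (forall x, V x -> Y x \/ (forall k, x k = 0)).

From Pilot Require Import Defs.
From Stdlib Require Import Reals Lra Lia List Cantor.
From Stdlib Require Import Classical ClassicalEpsilon FunctionalExtensionality.
Open Scope R_scope.

(* - Lineability ([lineable_of_windows]): for a positive nondecreasing [M], the
     span of "sawtooth" sequences, the [i]-th running periodically through
     [1, ..., M i] on the [i]-th column of the Cantor pairing, is an infinite
     dimensional subspace whose nonzero elements, with last nonzero coefficient
     at [p], have between [M p + 1] and [(p + 1) M p + 1] accumulation points.
     So [L(A)] is lineable once [A] contains all these windows.
   - Non-dense lineability ([not_densely_lineable_of_gaps]): accumulation points
     of [w + t v] are sums [p + t z], so [|L(w + t v)| <= |L(w)| |L(v)|].  If [A]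
     misses windows [[lo, lo^2]] with [lo] arbitrarily large, a dense subspace
     would contain approximants of the indicators of uncountably many almost
     disjoint branches of the binary tree; infinitely many share a number [c] of
     accumulation points, and adding [lo > c] of them one at a time with small
     weights produces an element of the subspace with at least [lo] but fewer
     than [lo] accumulation points. *)

Lemma Rabs_le_bounds x M : Rabs x <= M -> - M <= x <= M.
Proof. unfold Rabs; destruct (Rcase_abs x); lra. Qed.

Definition strict_incr (s : nat -> nat) : Prop := forall k, (s k < s (S k))%nat.

Lemma strict_incr_lt s : strict_incr s -> forall a b, (a < b)%nat -> (s a < s b)%nat.
Proof.
  intros Hs a b Hab. induction Hab as [|b _ IH]; [apply Hs|].
  specialize (Hs b). lia.
Qed.

Lemma strict_incr_ge s : strict_incr s -> forall k, (k <= s k)%nat.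
Proof. intros Hs k. induction k as [|k IH]; [lia|]. specialize (Hs k). lia. Qed.

Lemma strict_incr_comp f g : strict_incr f -> strict_incr g -> strict_incr (fun k => f (g k)).
Proof. intros Hf Hg k. apply strict_incr_lt; auto. Qed.

Lemma Un_cv_subseq u l s : Un_cv u l -> strict_incr s -> Un_cv (fun k => u (s k)) l.
Proof.
  intros Hu Hs eps Heps. destruct (Hu eps Heps) as [N HN]. exists N.
  intros k Hk. apply HN. pose proof (strict_incr_ge s Hs k). unfold ge in *. lia.
Qed.

(* A cluster value of [u] (in the sense of the library's [ValAdh]) is the
   limit of a subsequence: pick [s k] beyond [s (k-1)] within [1/(k+1)] of it. *)
Lemma cluster_subseq (u : nat -> R) (l : R) :
  ValAdh u l -> exists s, strict_incr s /\ Un_cv (fun k => u (s k)) l.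
Proof.
  intros Hl.
  assert (Hnear : forall kN : nat * nat, exists p,
             (snd kN <= p)%nat /\ Rabs (u p - l) < / INR (S (fst kN))).
  { intros [k N]. assert (Hpos : 0 < / INR (S k)) by (apply Rinv_0_lt_compat, lt_0_INR; lia).
    apply (Hl (disc l (mkposreal _ Hpos)) N). exists (mkposreal _ Hpos). now intros x Hx. }
  destruct (choice _ Hnear) as [g Hg].
  set (s := fix s k := match k with O => g (O, O) | S k' => g (S k', S (s k')) end).
  assert (Hclose : forall k, Rabs (u (s k) - l) < / INR (S k)).
  { intros [|k]; apply (Hg (_, _)). }
  exists s. split.
  - intro k. exact (proj1 (Hg (S k, S (s k)))).
  - intros eps Heps. destruct (archimed_cor1 eps Heps) as [N [HN HN0]].
    exists N. intros k Hk. unfold R_dist.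
    apply Rlt_trans with (/ INR (S k)); [apply Hclose|].
    apply Rle_lt_trans with (/ INR N); [|exact HN].
    apply Rinv_le_contravar; [apply lt_0_INR; lia|apply le_INR; lia].
Qed.

Lemma bounded_cv_subseq (u : nat -> R) :
  Defs.bounded u -> exists s l, strict_incr s /\ Un_cv (fun k => u (s k)) l.
Proof.
  intros [M HM].
  destruct (Bolzano_Weierstrass u (fun x => - M <= x <= M) (compact_P3 (- M) M)) as [l Hl].
  { intro k. apply Rabs_le_bounds, HM. }
  destruct (cluster_subseq u l Hl) as [s Hs]. eauto.
Qed.

Lemma bounded_comp (u : nat -> R) (f : nat -> nat) : Defs.bounded u -> Defs.bounded (fun k => u (f k)).
Proof. intros [M HM]. exists M. intro; apply HM. Qed.

Lemma Un_cv_const c : Un_cv (fun _ => c) c.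
Proof. intros e He. exists O. intros. unfold R_dist. rewrite Rminus_diag, Rabs_R0. auto. Qed.

Lemma Un_cv_dist_le u l a e :
  Un_cv u l -> (exists N, forall k, (N <= k)%nat -> Rabs (u k - a) <= e) -> Rabs (l - a) <= e.
Proof.
  intros Hu [N HN]. apply Rnot_lt_le. intro Hlt.
  destruct (Hu (Rabs (l - a) - e)) as [N' HN']; [lra|].
  specialize (HN' (max N N') (Nat.le_max_r N N')). specialize (HN (max N N') (Nat.le_max_l N N')).
  unfold R_dist in HN'. rewrite Rabs_minus_sym in HN'.
  pose proof (Rabs_triang (l - u (max N N')) (u (max N N') - a)).
  replace (l - u (max N N') + (u (max N N') - a)) with (l - a) in H by ring. lra.
Qed.

Lemma list_sep_point (L : list R) (a : R) :
  exists d, 0 < d /\ forall x, In x L -> x <> a -> d <= Rabs (x - a).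
Proof.
  induction L as [|y L [d [Hd H]]].
  - exists 1. split; [lra|]. intros x [].
  - destruct (Req_dec y a) as [->|Hy].
    + exists d. split; auto. intros x [->|Hx] Hxa; [contradiction|auto].
    + exists (Rmin d (Rabs (y - a))). split.
      * apply Rmin_pos; auto. apply Rabs_pos_lt. lra.
      * intros x [->|Hx] Hxa; [apply Rmin_r|].
        eapply Rle_trans; [apply Rmin_l|auto].
Qed.

Lemma list_sep (L : list R) :
  exists d, 0 < d /\ forall a b, In a L -> In b L -> a <> b -> d <= Rabs (a - b).
Proof.
  induction L as [|y L [d [Hd H]]].
  - exists 1. split; [lra|]. intros a b [].
  - destruct (list_sep_point L y) as [e [He He']].
    exists (Rmin d e). split; [apply Rmin_pos; auto|].
    intros a b [<-|Ha] [<-|Hb] Hab.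
    + contradiction.
    + rewrite Rabs_minus_sym. eapply Rle_trans; [apply Rmin_r|]. apply He'; auto.
    + eapply Rle_trans; [apply Rmin_r|]. apply He'; auto.
    + eapply Rle_trans; [apply Rmin_l|]. auto.
Qed.

Lemma acc_points_in_list (x : nat -> R) (L : list R) :
  (forall k, In (x k) L) -> forall a, acc_points x a -> In a L.
Proof.
  intros HL a [phi [_ Hcv]]. apply NNPP. intro Ha.
  destruct (list_sep_point L a) as [d [Hd Hsep]]. destruct (Hcv d Hd) as [N HN].
  specialize (HN N (le_n N)). unfold R_dist in HN.
  assert (Hne : x (phi N) <> a) by (intro E; apply Ha; rewrite <- E; auto).
  specialize (Hsep _ (HL (phi N)) Hne). lra.
Qed.

Lemma has_card_le_list S m L :
  has_card S m -> (forall a, S a -> In a L) -> (m <= length L)%nat.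
Proof.
  intros [l [Hnd [<- HS]]] H. apply NoDup_incl_length; auto.
  intros a Ha. apply H, HS, Ha.
Qed.

Lemma has_card_ge_list S m L :
  has_card S m -> NoDup L -> (forall a, In a L -> S a) -> (length L <= m)%nat.
Proof.
  intros [l [Hnd [<- HS]]] HL H. apply NoDup_incl_length; auto.
  intros a Ha. apply HS, H, Ha.
Qed.

Lemma has_card_of_list (P : R -> Prop) L :
  (forall a, P a -> In a L) -> exists m, has_card P m /\ (m <= length L)%nat.
Proof.
  revert P. induction L as [|x L IH]; intros P H.
  - exists O. split; [|simpl; lia]. exists nil. repeat split; [constructor|apply H|intros []].
  - destruct (IH (fun a => P a /\ a <> x)) as [m [[l [Hnd [Hl HS]]] Hm]].
    { intros a [Ha Hax]. destruct (H a Ha) as [->|]; tauto. }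
    destruct (classic (P x)) as [Hx|Hx].
    + exists (S m). split; [|simpl; lia]. exists (x :: l). repeat split.
      * constructor; auto. intro Hi. apply HS in Hi. tauto.
      * simpl; lia.
      * intro Ha. destruct (Req_dec a x) as [->|]; [left; auto|right; apply HS; auto].
      * intros [<-|Hi]; [auto|apply HS in Hi; tauto].
    + exists m. split; [|simpl; lia]. exists l. repeat split; auto.
      * intro Ha. apply HS. split; auto. intros ->. tauto.
      * intro Hi. apply HS in Hi. tauto.
Qed.

Lemma has_card_acc_points_zero : has_card (acc_points (fun _ => 0)) 1.
Proof.
  exists (0 :: nil). repeat split.
  - constructor; [intros []|constructor].
  - intros [phi [_ Hcv]]. left. eapply UL_sequence; [apply Un_cv_const|exact Hcv].
  - intros [<-|[]]. exists (fun k => k). split; [intro; lia|apply Un_cv_const].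
Qed.

(* Every accumulation point of [w + t v] has the form [p + t z] with [p] an
   accumulation point of [w] and [z] one of [v]: refine a subsequence along
   which [w] converges too. *)
Lemma acc_points_comb (w v : nat -> R) t a :
  Defs.bounded w -> t <> 0 -> acc_points (fun k => w k + t * v k) a ->
  exists p z, acc_points w p /\ acc_points v z /\ a = p + t * z.
Proof.
  intros Hb Ht [phi [Hphi Hcv]].
  destruct (bounded_cv_subseq (fun k => w (phi k)) (bounded_comp w phi Hb)) as [s [p [Hs Hp]]].
  assert (Hincr : strict_incr (fun k => phi (s k))) by (apply strict_incr_comp; auto).
  exists p, ((a - p) / t). repeat split; [exists (fun k => phi (s k)); auto| |field; auto].
  exists (fun k => phi (s k)). split; [exact Hincr|].
  apply Un_cv_ext with (fun k => (w (phi (s k)) + t * v (phi (s k)) - w (phi (s k))) * / t).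
  - intro k. field. exact Ht.
  - apply CV_mult; [|apply Un_cv_const].
    apply CV_minus; [apply (Un_cv_subseq _ _ _ Hcv Hs)|exact Hp].
Qed.

Lemma card_acc_points_comb w v t cw cv m :
  Defs.bounded w -> t <> 0 ->
  has_card (acc_points w) cw -> has_card (acc_points v) cv ->
  has_card (acc_points (fun k => w k + t * v k)) m -> (m <= cw * cv)%nat.
Proof.
  intros Hb Ht [lw [_ [<- Hw]]] [lv [_ [<- Hv]]] Hm.
  rewrite <- length_prod, <- (length_map (fun pz => fst pz + t * snd pz)).
  eapply has_card_le_list; [exact Hm|]. intros a Ha.
  destruct (acc_points_comb w v t a Hb Ht Ha) as [p [z [Hp [Hz ->]]]].
  apply in_map_iff. exists (p, z). split; [reflexivity|].
  apply in_prod; [apply Hw|apply Hv]; auto.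
Qed.

(* The path of [b : nat -> bool] through the infinite binary tree, nodes being
   numbered in heap order; distinct paths eventually separate, so their ranges
   form an uncountable almost disjoint family of infinite subsets of [nat]. *)
Fixpoint branch (b : nat -> bool) (m : nat) : nat :=
  match m with
  | O => O
  | S m' => (2 * branch b m' + 1 + (if b m' then 1 else 0))%nat
  end.

Lemma branch_incr b : strict_incr (branch b).
Proof. intro k. simpl. destruct (b k); lia. Qed.

Lemma branch_inj b b' m : forall m', branch b m = branch b' m' ->
  m = m' /\ forall j, (j < m)%nat -> b j = b' j.
Proof.
  induction m as [|m IH]; intros [|m'] H; simpl in H.
  - split; [reflexivity|intros; lia].
  - destruct (b' m'); lia.
  - destruct (b m); lia.
  - assert (E : branch b m = branch b' m' /\ b m = b' m').
    { destruct (b m), (b' m'); split; auto; lia. }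
    destruct E as [E1 E2]. destruct (IH m' E1) as [-> Hj]. split; [reflexivity|].
    intros j Hj'. destruct (Nat.eq_dec j m') as [->|]; auto. apply Hj. lia.
Qed.

Lemma branch_apart b b' : b <> b' ->
  exists J, forall m m', (J <= m)%nat -> branch b m <> branch b' m'.
Proof.
  intros Hne. assert (Hj : exists j, b j <> b' j).
  { apply NNPP. intro H. apply Hne. apply functional_extensionality. intro x.
    apply NNPP. intro. apply H. eauto. }
  destruct Hj as [j Hj]. exists (S j). intros m m' Hm E.
  apply branch_inj in E. apply Hj, (proj2 E). lia.
Qed.

Definition branch_indicator (b : nat -> bool) (j : nat) : R :=
  if excluded_middle_informative (exists m, branch b m = j) then 1 else 0.

Lemma branch_indicator_on b m : branch_indicator b (branch b m) = 1.
Proof.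
  unfold branch_indicator. destruct excluded_middle_informative as [|Hn]; auto.
  exfalso; eauto.
Qed.

Lemma branch_indicator_off b b' : b <> b' ->
  exists J, forall m, (J <= m)%nat -> branch_indicator b' (branch b m) = 0.
Proof.
  intro H. destruct (branch_apart b b' H) as [J HJ]. exists J. intros m Hm.
  unfold branch_indicator. destruct excluded_middle_informative as [[m' E]|]; auto.
  exfalso. exact (HJ m m' Hm (eq_sym E)).
Qed.

Definition infinitely_many (P : (nat -> bool) -> Prop) : Prop :=
  forall N, exists l, NoDup l /\ length l = N /\ forall b, In b l -> P b.

Lemma finite_of_not_infinitely_many (P : (nat -> bool) -> Prop) :
  ~ infinitely_many P -> exists L, forall b, P b -> In b L.
Proof.
  intros HP. apply NNPP. intro HL. apply HP. intro N.
  induction N as [|N [l [Hnd [Hlen Hl]]]].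
  - exists nil. repeat split; [constructor|intros b []].
  - apply not_ex_all_not with (n := l) in HL. apply not_all_ex_not in HL.
    destruct HL as [b Hb]. apply imply_to_and in Hb. destruct Hb as [Hb Hbl].
    exists (b :: l). repeat split; [constructor; auto|simpl; lia|].
    intros b' [<-|Hb']; auto.
Qed.

(* Pigeonhole principle for the uncountable set of boolean sequences: some
   fibre of any map [(nat -> bool) -> nat] is infinite.  Otherwise all fibres
   are finite lists, and a diagonal argument produces a sequence in none. *)
Lemma infinite_fiber (cnt : (nat -> bool) -> nat) :
  exists c, infinitely_many (fun b => cnt b = c).
Proof.
  apply NNPP. intro H.
  assert (HL : forall c, exists L, forall b, cnt b = c -> In b L).
  { intro c. apply finite_of_not_infinitely_many. intro Hc. apply H. eauto. }
  destruct (choice _ HL) as [fiber Hfiber].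
  set (d := fun j => let (c, i) := of_nat j in negb (nth i (fiber c) (fun _ => true) j)).
  destruct (In_nth _ _ (fun _ => true) (Hfiber (cnt d) d eq_refl)) as [i [_ Hi]].
  assert (E : d (to_nat (cnt d, i)) = negb (d (to_nat (cnt d, i)))).
  { unfold d at 1. rewrite cancel_of_to, Hi. reflexivity. }
  destruct (d (to_nat (cnt d, i))); discriminate.
Qed.

Definition branch_limit (w : nat -> R) (b : nat -> bool) (y : R) : Prop :=
  exists s, strict_incr s /\ Un_cv (fun k => w (branch b (s k))) y.

Lemma branch_limit_acc w b y : branch_limit w b y -> acc_points w y.
Proof.
  intros [s [Hs Hcv]]. exists (fun k => branch b (s k)). split; [|exact Hcv].
  apply strict_incr_comp; [apply branch_incr|exact Hs].
Qed.

Lemma branch_limit_exists w b : Defs.bounded w -> exists y, branch_limit w b y.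
Proof.
  intro Hw. destruct (bounded_cv_subseq _ (bounded_comp w (branch b) Hw)) as [s [y Hy]].
  exists y, s. exact Hy.
Qed.

(* Along a further subsequence [v] converges as well, to some [z] which stays
   within [e] of [a] when [v] eventually does so along the branch; then
   [y + t z] is a branch limit of [w + t v] for every [t]. *)
Lemma branch_limit_comb w v b y a e :
  Defs.bounded v -> branch_limit w b y ->
  (exists J, forall m, (J <= m)%nat -> Rabs (v (branch b m) - a) <= e) ->
  exists z, Rabs (z - a) <= e /\
    forall t, branch_limit (fun k => w k + t * v k) b (y + t * z).
Proof.
  intros Hv [s [Hs Hy]] [J HJ].
  destruct (bounded_cv_subseq _ (bounded_comp v (fun k => branch b (s k)) Hv))
    as [r [z [Hr Hz]]].
  exists z. split.
  - apply (Un_cv_dist_le _ _ _ _ Hz). exists J. intros k Hk. apply HJ.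
    pose proof (strict_incr_ge r Hr k). pose proof (strict_incr_ge s Hs (r k)). lia.
  - intro t. exists (fun k => s (r k)). split; [apply strict_incr_comp; auto|].
    apply CV_plus; [exact (Un_cv_subseq _ _ _ Hy Hr)|].
    apply CV_mult; [apply Un_cv_const|exact Hz].
Qed.

Lemma shifted_eq y1 y2 z1 z2 t :
  0 < t -> (y1 <> y2 -> t * Rabs (z1 - z2) < Rabs (y1 - y2)) ->
  y1 + t * z1 = y2 + t * z2 -> y1 = y2 /\ z1 = z2.
Proof.
  intros Ht Hfar E. destruct (Req_dec y1 y2) as [<-|Hne].
  - split; [reflexivity|]. apply Rmult_eq_reg_l with t; lra.
  - exfalso. specialize (Hfar Hne).
    replace (y1 - y2) with (t * (z2 - z1)) in Hfar by lra.
    rewrite Rabs_mult, Rabs_minus_sym, (Rabs_pos_eq t) in Hfar by lra. lra.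
Qed.

Lemma shifted_NoDup (ys : list R) (y' z' t : R) (Z : R -> R) :
  NoDup ys -> 0 < t ->
  (forall a b, In a (y' :: ys) -> In b (y' :: ys) -> a <> b -> 4 * t <= Rabs (a - b)) ->
  (forall y, In y ys -> Rabs (Z y) <= 1/4) -> Rabs (z' - 1) <= 1/4 ->
  NoDup ((y' + t * z') :: map (fun y => y + t * Z y) ys).
Proof.
  intros Hnd Ht Hsep HZ Hz'.
  assert (Hsmall : forall z1 z2, Rabs (z1 - z2) <= 3/2 -> t * Rabs (z1 - z2) < 4 * t).
  { intros z1 z2 H. apply Rle_lt_trans with (t * (3/2)); [apply Rmult_le_compat_l|]; lra. }
  apply Rabs_le_bounds in Hz'. constructor.
  - intro Hin. apply in_map_iff in Hin. destruct Hin as [y [E Hy]].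
    pose proof (Rabs_le_bounds _ _ (HZ y Hy)).
    assert (Hzz : z' = Z y); [|lra].
    apply (shifted_eq y' y z' (Z y) t Ht); [|auto].
    intro Hne. eapply Rlt_le_trans; [apply Hsmall, Rabs_le; lra|].
    apply Hsep; simpl; auto.
  - apply NoDup_map_NoDup_ForallPairs; [|exact Hnd].
    intros a b Ha Hb E. pose proof (Rabs_le_bounds _ _ (HZ a Ha)).
    pose proof (Rabs_le_bounds _ _ (HZ b Hb)).
    apply (shifted_eq a b (Z a) (Z b) t Ht); [|exact E].
    intro Hne. eapply Rlt_le_trans; [apply Hsmall, Rabs_le; lra|].
    apply Hsep; simpl; auto.
Qed.

Section GapObstruction.

Variable A : nat -> Prop.
Variable V : (nat -> R) -> Prop.
Hypothesis HV : is_subspace V.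
Hypothesis HVA : forall x, V x -> Lset A x \/ (forall k, x k = 0).
Variables lo hi : nat.
Hypothesis Hlo : (1 < lo)%nat.
Hypothesis Hhi : (lo * lo < hi)%nat.
Hypothesis Hgap : forall m, (lo <= m < hi)%nat -> ~ A m.

Lemma subspace_bounded x : V x -> Defs.bounded x.
Proof. apply HV. Qed.

Lemma subspace_comb w v t : V w -> V v -> V (fun k => w k + t * v k).
Proof.
  destruct HV as [_ [_ [Hadd Hscale]]]. intros Hw Hv. apply Hadd; [exact Hw|].
  apply Hscale, Hv.
Qed.

(* Combining two elements of [V] with fewer than [lo] accumulation points each
   gives fewer than [lo^2 < hi] of them, hence fewer than [lo] by the gap. *)
Lemma comb_few_acc_points w v t cw cv :
  V w -> V v -> has_card (acc_points w) cw -> (cw < lo)%nat ->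
  has_card (acc_points v) cv -> (cv < lo)%nat -> t <> 0 ->
  exists m, has_card (acc_points (fun k => w k + t * v k)) m /\ (m < lo)%nat.
Proof.
  intros Hw Hv Hcw Hlt Hcv Hlt' Ht.
  destruct (HVA _ (subspace_comb w v t Hw Hv)) as [[_ [m [Am Hm]]]|Hzero].
  - exists m. split; [exact Hm|].
    pose proof (card_acc_points_comb w v t cw cv m (subspace_bounded w Hw) Ht Hcw Hcv Hm).
    destruct (Nat.lt_ge_cases m lo) as [|Hge]; [assumption|].
    exfalso. apply (Hgap m); [|exact Am]. split; [exact Hge|].
    assert (cw * cv < lo * lo)%nat by (apply Nat.mul_lt_mono; assumption). lia.
  - exists 1%nat. split; [|exact Hlo].
    replace (fun k => w k + t * v k) with (fun _ : nat => 0);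
      [apply has_card_acc_points_zero|].
    apply functional_extensionality. intro k. symmetry. apply Hzero.
Qed.

Variable c : nat.
Variable B : nat -> (nat -> bool).
Hypothesis HB : forall i j, (i < lo)%nat -> (j < lo)%nat -> i <> j -> B i <> B j.
Variable u : nat -> (nat -> R).
Hypothesis Hu : forall i, (i < lo)%nat ->
  V (u i) /\ has_card (acc_points (u i)) c /\
  forall k, Rabs (branch_indicator (B i) k - u i k) <= 1/4.

(* After stage [m] we have [w] in [V] with fewer than [lo] accumulation points,
   [m] of which are realised along the first [m] branches. *)
Definition stage (m : nat) : Prop :=
  exists w cw ys, V w /\ has_card (acc_points w) cw /\ (cw < lo)%nat /\
    NoDup ys /\ length ys = m /\
    forall y, In y ys -> exists i, (i < m)%nat /\ branch_limit w (B i) y.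

Lemma stage_0 : stage 0.
Proof.
  exists (fun _ => 0), 1%nat, nil.
  repeat split; [apply HV|apply has_card_acc_points_zero|exact Hlo|constructor|].
  intros y [].
Qed.

(* Passing to [w + t u_m] for a small [t > 0]: the old points move by at most
   [t/4] (as [u_m] is almost [0] on the other branches), and a new point
   appears along branch [m] (where [u_m] is almost [1]). *)
Lemma stage_S m : (c < lo)%nat -> (m < lo)%nat -> stage m -> stage (S m).
Proof.
  intros Hc Hm [w [cw [ys [Hw [Hcw [Hlt [Hnd [Hlen Hys]]]]]]]].
  destruct (Hu m Hm) as [Hv [Hcv Happrox]]. set (v := u m) in *.
  pose proof (subspace_bounded v Hv) as Bv.
  assert (Hold : forall y, exists z, In y ys -> Rabs z <= 1/4 /\
            forall t, exists i, (i < m)%nat /\ branch_limit (fun k => w k + t * v k) (B i) (y + t * z)).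
  { intro y. destruct (classic (In y ys)) as [Hy|Hy]; [|exists 0; tauto].
    destruct (Hys y Hy) as [i [Hi Hlim]].
    destruct (branch_indicator_off (B i) (B m)) as [J HJ]; [apply HB; lia|].
    destruct (branch_limit_comb w v (B i) y 0 (1/4) Bv Hlim) as [z [Hz Hzt]].
    { exists J. intros k Hk. rewrite <- (HJ k Hk), Rabs_minus_sym. apply Happrox. }
    exists z. intros _. rewrite Rminus_0_r in Hz. split; [exact Hz|]. eauto. }
  destruct (choice _ Hold) as [Z HZ].
  destruct (branch_limit_exists w (B m) (subspace_bounded w Hw)) as [y' Hy'].
  destruct (branch_limit_comb w v (B m) y' 1 (1/4) Bv Hy') as [z' [Hz' Hz't]].
  { exists O. intros k _. rewrite <- (branch_indicator_on (B m) k) at 1; rewrite Rabs_minus_sym. apply Happrox. }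
  destruct (list_sep (y' :: ys)) as [d [Hd Hsep]].
  destruct (comb_few_acc_points w v (d / 4) cw c Hw Hv Hcw Hlt Hcv Hc) as [cw' [Hcw' Hlt']];
    [lra|].
  exists (fun k => w k + d / 4 * v k), cw', ((y' + d / 4 * z') :: map (fun y => y + d / 4 * Z y) ys).
  repeat split; [apply subspace_comb; auto|exact Hcw'|exact Hlt'| | |].
  - apply shifted_NoDup; [exact Hnd|lra| |intros y Hy; apply (HZ y Hy)|exact Hz'].
    intros a b Ha Hb Hab. replace (4 * (d / 4)) with d by field. auto.
  - simpl. rewrite length_map. congruence.
  - intros y [<-|Hin]; [exists m; split; [lia|apply Hz't]|].
    apply in_map_iff in Hin. destruct Hin as [y0 [<- Hy0]].
    destruct (proj2 (HZ y0 Hy0) (d / 4)) as [i [Hi Hlim]]. exists i. split; [lia|exact Hlim].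
Qed.

(* The approximants must therefore have at least [lo] accumulation points:
   otherwise stage [lo] yields [w] with [lo] distinct accumulation points
   but fewer than [lo] in total. *)
Lemma approximants_many_acc_points : (lo <= c)%nat.
Proof.
  destruct (Nat.lt_ge_cases c lo) as [Hc|]; [exfalso|assumption].
  assert (Hstage : forall m, (m <= lo)%nat -> stage m).
  { induction m as [|m IH]; intro Hm; [apply stage_0|apply stage_S; auto; apply IH; lia]. }
  destruct (Hstage lo (le_n lo)) as [w [cw [ys [_ [Hcw [Hlt [Hnd [Hlen Hys]]]]]]]].
  assert (lo <= cw)%nat; [|lia].
  rewrite <- Hlen. apply (has_card_ge_list _ _ _ Hcw Hnd).
  intros y Hy. destruct (Hys y Hy) as [i [_ Hlim]]. exact (branch_limit_acc _ _ _ Hlim).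
Qed.

End GapObstruction.

(* If [A] misses windows [[lo, hi)] with [lo^2 < hi] and [lo] arbitrarily large,
   then [L(A)] is not densely lineable: approximate the uncountably many branch
   indicators in [V]; infinitely many approximants share a number [c] of
   accumulation points, which contradicts the obstruction for a window above [c]. *)
Lemma not_densely_lineable_of_gaps (A : nat -> Prop) :
  (forall c, exists lo hi, (c < lo)%nat /\ (1 < lo)%nat /\ (lo * lo < hi)%nat /\
     forall m, (lo <= m < hi)%nat -> ~ A m) ->
  ~ densely_lineable (Lset A).
Proof.
  intros Hgaps [V [HV [_ [Hdense HVA]]]].
  assert (Happrox : forall b, exists v, V v /\
            forall k, Rabs (branch_indicator b k - v k) <= 1/4).
  { intro b. apply Hdense; [|lra]. exists 1. intro k. unfold branch_indicator.
    destruct excluded_middle_informative; rewrite ?Rabs_R1, ?Rabs_R0; lra. }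
  destruct (choice _ Happrox) as [vb Hvb].
  assert (Hcard : forall b, exists m, has_card (acc_points (vb b)) m).
  { intro b. destruct (HVA (vb b) (proj1 (Hvb b))) as [[_ [m [_ Hm]]]|Hzero]; [eauto|].
    exfalso. pose proof (proj2 (Hvb b) (branch b 0)) as Hk.
    rewrite branch_indicator_on, Hzero, Rminus_0_r, Rabs_R1 in Hk. lra. }
  destruct (choice _ Hcard) as [cnt Hcnt].
  destruct (infinite_fiber cnt) as [c Hc].
  destruct (Hgaps c) as [lo [hi [Hclo [Hlo [Hhi Hgap]]]]].
  destruct (Hc lo) as [bs [Hnd [Hlen Hbs]]].
  set (B := fun i => nth i bs (fun _ => true)).
  assert (lo <= c)%nat; [|lia].
  apply (approximants_many_acc_points A V HV HVA lo hi Hlo Hhi Hgap c B)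
    with (u := fun i => vb (B i)).
  - intros i j Hi Hj Hij E. apply Hij. eapply NoDup_nth; eauto; rewrite Hlen; auto.
  - intros i Hi. destruct (Hvb (B i)) as [Hv Hclose]. repeat split; auto.
    rewrite <- (Hbs (B i)); [apply Hcnt|apply nth_In; lia].
Qed.

Definition span (f : nat -> nat -> R) (x : nat -> R) : Prop :=
  exists N c, forall k, x k = lincomb N c f k.

Lemma lincomb_ext N c c' f k :
  (forall i, (i < N)%nat -> c i = c' i) -> lincomb N c f k = lincomb N c' f k.
Proof.
  induction N as [|N IH]; intro Hc; simpl; [reflexivity|].
  rewrite IH by (intros; apply Hc; lia). now rewrite (Hc N) by lia.
Qed.

Lemma lincomb_zero N c f k : (forall i, (i < N)%nat -> c i = 0) -> lincomb N c f k = 0.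
Proof.
  intro Hc. rewrite (lincomb_ext N c (fun _ => 0)) by exact Hc.
  induction N as [|N IH]; simpl; [reflexivity|]. rewrite IH by (intros; apply Hc; lia). ring.
Qed.

Lemma lincomb_add N c c' f k :
  lincomb N c f k + lincomb N c' f k = lincomb N (fun i => c i + c' i) f k.
Proof. induction N as [|N IH]; simpl; [ring|]. rewrite <- IH. ring. Qed.

Lemma lincomb_scale N r c f k : r * lincomb N c f k = lincomb N (fun i => r * c i) f k.
Proof. induction N as [|N IH]; simpl; [ring|]. rewrite <- IH. ring. Qed.

Lemma lincomb_pad N N' c f k :
  lincomb N c f k = lincomb (N + N') (fun i => if Nat.ltb i N then c i else 0) f k.
Proof.
  induction N' as [|N' IH].
  - rewrite Nat.add_0_r. apply lincomb_ext. intros i Hi.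
    destruct (Nat.ltb_spec i N); [reflexivity|lia].
  - rewrite Nat.add_succ_r. simpl. rewrite <- IH.
    destruct (Nat.ltb_spec (N + N') N); [lia|ring].
Qed.

Lemma bounded_plus x y : Defs.bounded x -> Defs.bounded y -> Defs.bounded (fun k => x k + y k).
Proof.
  intros [Mx Hx] [My Hy]. exists (Mx + My). intro k.
  eapply Rle_trans; [apply Rabs_triang|]. apply Rplus_le_compat; auto.
Qed.

Lemma bounded_scale r x : Defs.bounded x -> Defs.bounded (fun k => r * x k).
Proof.
  intros [Mx Hx]. exists (Rabs r * Mx). intro k. rewrite Rabs_mult.
  apply Rmult_le_compat_l; [apply Rabs_pos|apply Hx].
Qed.

Lemma bounded_lincomb N c f :
  (forall i, Defs.bounded (f i)) -> Defs.bounded (lincomb N c f).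
Proof.
  intro Hf. induction N as [|N IH]; simpl.
  - exists 0. intro k. rewrite Rabs_R0. lra.
  - apply bounded_plus; [exact IH|apply bounded_scale, Hf].
Qed.

Lemma span_subspace f : (forall i, Defs.bounded (f i)) -> is_subspace (span f).
Proof.
  intro Hf. repeat split.
  - intros x [N [c Hx]]. destruct (bounded_lincomb N c f Hf) as [B HB].
    exists B. intro k. rewrite Hx. apply HB.
  - exists O, (fun _ => 0). reflexivity.
  - intros x y [N [c Hx]] [N' [c' Hy]].
    exists (N + N')%nat, (fun i => (if Nat.ltb i N then c i else 0) +
                                   (if Nat.ltb i N' then c' i else 0)).
    intro k. rewrite Hx, Hy, (lincomb_pad N N'), (lincomb_pad N' N), (Nat.add_comm N' N).
    apply lincomb_add.
  - intros r x [N [c Hx]]. exists N, (fun i => r * c i). intro k.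
    rewrite Hx. apply lincomb_scale.
Qed.

Lemma span_generator f i : span f (f i).
Proof.
  exists (S i), (fun j => if Nat.eqb j i then 1 else 0). intro k. simpl.
  rewrite Nat.eqb_refl, lincomb_zero; [ring|].
  intros j Hj. destruct (Nat.eqb_spec j i); [lia|reflexivity].
Qed.

Lemma last_nonzero_coef N (c : nat -> R) : (exists i, (i < N)%nat /\ c i <> 0) ->
  exists p, (p < N)%nat /\ c p <> 0 /\ forall i, (p < i < N)%nat -> c i = 0.
Proof.
  induction N as [|N IH]; intros [i [Hi Hc]]; [lia|].
  destruct (Req_dec (c N) 0) as [HN|HN].
  - destruct IH as [p [Hp [Hcp Htop]]].
    + exists i. split; [|exact Hc]. destruct (Nat.eq_dec i N) as [->|]; [contradiction|lia].
    + exists p. repeat split; [lia|exact Hcp|]. intros j Hj.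
      destruct (Nat.eq_dec j N) as [->|]; [exact HN|apply Htop; lia].
  - exists N. repeat split; [lia|exact HN|]. intros; lia.
Qed.

Lemma to_nat_mono x y y' : (y < y')%nat -> (to_nat (x, y) < to_nat (x, y'))%nat.
Proof. intro H. pose proof (to_nat_spec x y). pose proof (to_nat_spec x y'). nia. Qed.

(* The witnesses of lineability: through the Cantor pairing [nat ~ nat * nat],
   the [i]-th sequence runs periodically through [1, 2, ..., M i] on column [i]
   and vanishes elsewhere. *)
Section Sawtooth.

Variable M : nat -> nat.
Hypothesis HM : forall i, (0 < M i)%nat.

Definition sawtooth (i j : nat) : R :=
  let (a, l) := of_nat j in if Nat.eqb a i then INR (S (l mod M i)) else 0.

Lemma sawtooth_bounded i : Defs.bounded (sawtooth i).
Proof.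
  exists (INR (M i)). intro j. unfold sawtooth. destruct (of_nat j) as [a l].
  destruct (Nat.eqb_spec a i).
  - rewrite Rabs_pos_eq by apply pos_INR. apply le_INR.
    pose proof (Nat.mod_upper_bound l (M i) ltac:(specialize (HM i); lia)). lia.
  - rewrite Rabs_R0. apply pos_INR.
Qed.

Lemma lincomb_sawtooth N c j : lincomb N c sawtooth j =
  let (a, l) := of_nat j in if Nat.ltb a N then c a * INR (S (l mod M a)) else 0.
Proof.
  induction N as [|N IH]; cbn [lincomb].
  - destruct (of_nat j); reflexivity.
  - rewrite IH. unfold sawtooth. destruct (of_nat j) as [a l].
    destruct (Nat.ltb_spec a N), (Nat.ltb_spec a (S N)), (Nat.eqb_spec a N);
      subst; try lia; ring.
Qed.

Lemma lincomb_sawtooth_at N c a l : lincomb N c sawtooth (to_nat (a, l)) =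
  if Nat.ltb a N then c a * INR (S (l mod M a)) else 0.
Proof. rewrite lincomb_sawtooth, cancel_of_to. reflexivity. Qed.

(* The sawtooth sequences are linearly independent: evaluate at the start of column [i]. *)
Lemma sawtooth_span_inf_dim : inf_dim (span sawtooth).
Proof.
  intro N. exists sawtooth. split; [intros i _; apply span_generator|].
  intros c Hc i Hi. specialize (Hc (to_nat (i, O))).
  rewrite lincomb_sawtooth_at, Nat.Div0.mod_0_l in Hc.
  destruct (Nat.ltb_spec i N); [|lia]. simpl in Hc. lra.
Qed.

Variables (N : nat) (c : nat -> R) (p : nat).
Hypothesis HpN : (p < N)%nat.
Hypothesis Hcp : c p <> 0.
Hypothesis Htop : forall i, (p < i < N)%nat -> c i = 0.

(* [0] and the [M p] distinct values [c p * r], [1 <= r <= M p], taken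
   periodically on column [p], are accumulation points of [x]. *)
Lemma sawtooth_acc_points_lower :
  NoDup (0 :: map (fun r => c p * INR (S r)) (seq 0 (M p))) /\
  forall a, In a (0 :: map (fun r => c p * INR (S r)) (seq 0 (M p))) ->
    acc_points (lincomb N c sawtooth) a.
Proof.
  split.
  - constructor.
    + intro Hin. apply in_map_iff in Hin. destruct Hin as [r [E _]].
      apply Rmult_integral in E. destruct E as [|E]; [contradiction|].
      exact (not_0_INR (S r) ltac:(lia) E).
    + apply NoDup_map_NoDup_ForallPairs; [|apply seq_NoDup].
      intros r r' _ _ E. apply Rmult_eq_reg_l in E; [|exact Hcp].
      apply INR_eq in E. lia.
  - intros a [<-|Hin].
    + exists (fun s => to_nat (N, s)). split; [intro; apply to_nat_mono; lia|].
      apply Un_cv_ext with (fun _ => 0); [|apply Un_cv_const].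
      intro k. rewrite lincomb_sawtooth_at. destruct (Nat.ltb_spec N N); [lia|reflexivity].
    + apply in_map_iff in Hin. destruct Hin as [r [<- Hr]]. apply in_seq in Hr.
      exists (fun s => to_nat (p, (r + s * M p)%nat)).
      split; [intro s; apply to_nat_mono; specialize (HM p); simpl; lia|].
      apply Un_cv_ext with (fun _ => c p * INR (S r)); [|apply Un_cv_const].
      intro k. rewrite lincomb_sawtooth_at. destruct (Nat.ltb_spec p N); [|lia].
      rewrite Nat.Div0.mod_add, Nat.mod_small by lia. reflexivity.
Qed.

Hypothesis HMmono : forall i j, (i <= j)%nat -> (M i <= M j)%nat.

Lemma sawtooth_values_upper k : In (lincomb N c sawtooth k)
  (0 :: map (fun ar => c (fst ar) * INR (S (snd ar))) (list_prod (seq 0 (S p)) (seq 0 (M p)))).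
Proof.
  rewrite lincomb_sawtooth. destruct (of_nat k) as [a l].
  destruct (Nat.ltb_spec a N); [|left; reflexivity].
  destruct (Nat.le_gt_cases a p) as [Hap|Hpa].
  - right. apply in_map_iff. exists (a, (l mod M a)%nat). split; [reflexivity|].
    apply in_prod; apply in_seq; [lia|].
    pose proof (Nat.mod_upper_bound l (M a) ltac:(specialize (HM a); lia)).
    pose proof (HMmono a p Hap). lia.
  - rewrite Htop by lia. left. ring.
Qed.

Lemma card_acc_points_sawtooth :
  exists m, has_card (acc_points (lincomb N c sawtooth)) m /\
            (M p < m <= S (S p * M p))%nat.
Proof.
  destruct (has_card_of_list (acc_points (lincomb N c sawtooth)) _
              (acc_points_in_list _ _ sawtooth_values_upper)) as [m [Hm Hle]].
  exists m. split; [exact Hm|].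
  destruct sawtooth_acc_points_lower as [Hnd Hacc].
  pose proof (has_card_ge_list _ _ _ Hm Hnd Hacc) as Hge.
  cbn [length] in Hle, Hge. rewrite length_map, length_prod, !length_seq in Hle.
  rewrite length_map, length_seq in Hge. lia.
Qed.

End Sawtooth.

Lemma lineable_of_windows (A : nat -> Prop) (M : nat -> nat) :
  (forall i, (0 < M i)%nat) -> (forall i j, (i <= j)%nat -> (M i <= M j)%nat) ->
  (forall p m, (M p < m <= S (S p * M p))%nat -> A m) ->
  lineable (Lset A).
Proof.
  intros HM HMmono HA.
  pose proof (span_subspace (sawtooth M) (sawtooth_bounded M HM)) as Hsub.
  exists (span (sawtooth M)). split; [exact Hsub|].
  split; [apply sawtooth_span_inf_dim|].
  intros x [N [c Hx]].
  assert (Ex : x = lincomb N c (sawtooth M)) by (apply functional_extensionality; exact Hx).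
  subst x. destruct (classic (exists i, (i < N)%nat /\ c i <> 0)) as [Hne|Hzero].
  - left. destruct (last_nonzero_coef N c Hne) as [p [HpN [Hcp Htop]]].
    destruct (card_acc_points_sawtooth M HM N c p HpN Hcp Htop HMmono) as [m [Hm Hwin]].
    split; [apply Hsub; exists N, c; reflexivity|].
    exists m. split; [apply (HA p m Hwin)|exact Hm].
  - right. intro k. apply lincomb_zero. intros i Hi.
    apply NNPP. intro Hci. apply Hzero. eauto.
Qed.

Section SparseSequence.

Variable n : nat -> nat.
Hypothesis Hpos : forall k, (1 <= k)%nat -> (0 < n k)%nat.
Hypothesis Hsq : forall k, (1 <= k)%nat -> (n k * n k < n (S k))%nat.

Lemma sparse_step k : (1 <= k)%nat -> (n k < n (S k))%nat.
Proof. intro Hk. pose proof (Hsq k Hk). pose proof (Hpos k Hk). nia. Qed.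

Lemma sparse_mono a b : (1 <= a)%nat -> (a <= b)%nat -> (n a <= n b)%nat.
Proof.
  intros Ha Hab. induction Hab as [|b Hab IH]; [lia|].
  pose proof (sparse_step b ltac:(lia)). lia.
Qed.

Lemma sparse_ge_index k : (1 <= k)%nat -> (k <= n k)%nat.
Proof.
  induction k as [|k IH]; intro Hk; [lia|].
  destruct (Nat.eq_dec k 0) as [->|Hk0]; [apply Hpos; lia|].
  pose proof (IH ltac:(lia)). pose proof (sparse_step k ltac:(lia)). lia.
Qed.

Definition odd_index (k : nat) : Prop := exists j, k = (2 * j + 1)%nat.

Definition kept (m : nat) : Prop :=
  (2 <= m)%nat /\ ~ (exists k, odd_index k /\ (n k <= m)%nat /\ (m < n (S k))%nat).

(* The window [(n_(2p+2), (p + 1) n_(2p+2) + 1]] lies in the kept block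
   [[n_(2p+2), n_(2p+3))], since [(p + 1) n_(2p+2) + 1 <= n_(2p+2)^2]. *)
Lemma kept_windows p m :
  (n (2 * p + 2) < m <= S (S p * n (2 * p + 2)))%nat -> kept m.
Proof.
  intros [Hlo Hhi].
  pose proof (sparse_ge_index (2 * p + 2) ltac:(lia)) as Hge.
  pose proof (Hsq (2 * p + 2) ltac:(lia)) as Hnext.
  replace (S (2 * p + 2)) with (2 * p + 3)%nat in Hnext by lia.
  split; [lia|]. intros [k [[j ->] [Hk1 Hk2]]].
  destruct (Nat.le_gt_cases j p) as [Hjp|Hpj].
  - pose proof (sparse_mono (S (2 * j + 1)) (2 * p + 2) ltac:(lia) ltac:(lia)). lia.
  - pose proof (sparse_mono (2 * p + 3) (2 * j + 1) ltac:(lia) ltac:(lia)). nia.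
Qed.

Lemma kept_gaps c : exists lo hi, (c < lo)%nat /\ (1 < lo)%nat /\ (lo * lo < hi)%nat /\
  forall m, (lo <= m < hi)%nat -> ~ kept m.
Proof.
  exists (n (2 * c + 3)), (n (2 * c + 4)).
  pose proof (sparse_ge_index (2 * c + 3) ltac:(lia)).
  repeat split; [lia|lia| |].
  - replace (2 * c + 4)%nat with (S (2 * c + 3)) by lia. apply Hsq. lia.
  - intros m Hm [_ Hkept]. apply Hkept. exists (2 * c + 3)%nat.
    split; [exists (S c); lia|]. replace (S (2 * c + 3)) with (2 * c + 4)%nat by lia. lia.
Qed.

End SparseSequence.

Theorem corollary2p9 :
  forall n : nat -> nat,
    (forall k, (1 <= k)%nat -> (0 < n k)%nat) ->
    (forall k, (1 <= k)%nat -> (n k * n k < n (S k))%nat) ->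
    exists K : nat -> Prop,
      (forall k, K k -> (1 <= k)%nat) /\
      (forall N, exists k, (N <= k)%nat /\ K k) /\
      let A := fun m : nat =>
        (2 <= m)%nat /\ ~ (exists k, K k /\ (n k <= m)%nat /\ (m < n (S k))%nat) in
      lineable (Lset A) /\ ~ densely_lineable (Lset A).
Proof.
  intros n Hpos Hsq. exists odd_index.
  split; [intros k [j ->]; lia|].
  split; [intro N; exists (2 * N + 1)%nat; split; [lia|exists N; reflexivity]|].
  intro A. split.
  - apply (lineable_of_windows _ (fun i => n (2 * i + 2)%nat)).
    + intro i. apply Hpos. lia.
    + intros i j Hij. apply (sparse_mono n Hpos Hsq); lia.
    + exact (kept_windows n Hpos Hsq).
  - exact (not_densely_lineable_of_gaps _ (kept_gaps n Hpos Hsq)).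
Qed.
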